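(* Consider $\partial_t x = F_2 x^{\otimes 2}+F_1x+F_0$ with pivot $s$, let $Q$ be a positive definite matrix, $O=Q^\dagger Q$, $u(t)=x(t)-s$ and $v(t)=Qu(t)$. Suppose $F_{2,s}\neq0$, $\mu_O(F_{1,s})<0$ and $\mu_O(F_{1,s})^2-4\|F_{2,s}\|_O\|F_{0,s}\|_O>0$, and define $$r_\pm^O=\frac{-\mu_O(F_{1,s})\pm\sqrt{\mu_O(F_{1,s})^2-4\|F_{2,s}\|_O\|F_{0,s}\|_O}}{2\|F_{2,s}\|_O}.$$ Then for all $t\ge0$ in the interval of existence of the solution: if $\|u(0)\|_O=\|v(0)\|\in[r_-^O,r_+^O)$, then $\|u(t)\|_O=\|v(t)\|\le\|u(0)\|_O<r_+^O$; if $\|u(0)\|_O=\|v(0)\|\in[0,r_-^O)$, then $\|u(t)\|_O=\|v(t)\|<r_-^O$.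
   Context: Setting: $x(t)\in\mathbb{R}^n$, $F_2\in\mathbb{R}^{n\times n^2}$, $F_1\in\mathbb{R}^{n\times n}$, $F_0\in\mathbb{R}^n$, Kronecker product $\otimes$; $F_{2,s}=F_2$, $F_{1,s}=F_1+F_2(s\otimes I_n+I_n\otimes s)$, $F_{0,s}=F_2s^{\otimes2}+F_1s+F_0$. Norms: $\|\cdot\|$ Euclidean/operator norm; for $O\succ0$, $\|y\|_O=\sqrt{y^\dagger Oy}$ for vectors, $\|F\|_O=\|O^{1/2}FO^{-1/2}\|$ for $n\times n$ matrices, $\|G\|_O=\|O^{1/2}G(O^{-1/2}\otimes O^{-1/2})\|$ for $n\times n^2$ matrices; $\mu(F)=\frac12\lambda_{\max}(F+F^\dagger)$, $\mu_O(F)=\mu(O^{1/2}FO^{-1/2})$. *)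

From HB Require Import structures.
From mathcomp Require Import all_boot all_order all_algebra.
From mathcomp Require Import all_classical all_reals all_analysis.
From mathcomp.real_closed Require Import mxtens.
Set Implicit Arguments. Unset Strict Implicit. Unset Printing Implicit Defensive.
Import Order.TTheory GRing.Theory Num.Theory.
Import numFieldNormedType.Exports.
Local Open Scope classical_set_scope.
Local Open Scope ring_scope.

Section Defs.
Variable R : realType.

Definition enorm {m : nat} (y : 'cV[R]_m) : R :=
  Num.sqrt (\sum_(i < m) y i 0 ^+ 2).

Definition opnorm {m p : nat} (A : 'M[R]_(m, p)) : R :=
  sup [set enorm (A *m y) | y in [set y : 'cV[R]_p | enorm y <= 1]].

Definition posdef {n : nat} (Q : 'M[R]_n) : Prop :=
  Q^T = Q /\ forall y : 'cV[R]_n, y != 0 -> 0 < (y^T *m Q *m y) 0 0.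

(* the positive definite square root O^{1/2} (chosen; unique when it exists) *)
Definition msqrt {n : nat} (O : 'M[R]_n) : 'M[R]_n :=
  xget 0 [set S | posdef S /\ S *m S = O].

Definition lambda_max {n : nat} (S : 'M[R]_n) : R :=
  sup [set a : R | eigenvalue S a].

Definition lognorm {n : nat} (F : 'M[R]_n) : R :=
  2^-1 * lambda_max (F + F^T).

Definition normO_vec {n : nat} (O : 'M[R]_n) (y : 'cV[R]_n) : R :=
  Num.sqrt ((y^T *m O *m y) 0 0).

Definition normO_mat {n : nat} (O : 'M[R]_n) (F : 'M[R]_n) : R :=
  opnorm (msqrt O *m F *m invmx (msqrt O)).

Definition normO_mat2 {n : nat} (O : 'M[R]_n) (G : 'M[R]_(n, n * n)) : R :=
  opnorm (msqrt O *m G *m tensmx (invmx (msqrt O)) (invmx (msqrt O))).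

Definition lognormO {n : nat} (O : 'M[R]_n) (F : 'M[R]_n) : R :=
  lognorm (msqrt O *m F *m invmx (msqrt O)).

Definition kron2 {n : nat} (x : 'cV[R]_n) : 'cV[R]_(n * n) := tensmx x x.

Definition kron_vI {n : nat} (s : 'cV[R]_n) : 'M[R]_(n * n, n) :=
  castmx (erefl, mul1n n) (tensmx s (1%:M : 'M[R]_n)).

Definition kron_Iv {n : nat} (s : 'cV[R]_n) : 'M[R]_(n * n, n) :=
  castmx (erefl, muln1 n) (tensmx (1%:M : 'M[R]_n) s).

Definition F2s {n : nat} (F2 : 'M[R]_(n, n * n)) (s : 'cV[R]_n) := F2.
Definition F1s {n : nat} (F2 : 'M[R]_(n, n * n)) (F1 : 'M[R]_n) (s : 'cV[R]_n) :=
  F1 + F2 *m (kron_vI s + kron_Iv s).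
Definition F0s {n : nat} (F2 : 'M[R]_(n, n * n)) (F1 : 'M[R]_n) (F0 : 'cV[R]_n)
  (s : 'cV[R]_n) : 'cV[R]_n :=
  F2 *m kron2 s + F1 *m s + F0.

Definition qrhs {n : nat} (F2 : 'M[R]_(n, n * n)) (F1 : 'M[R]_n) (F0 : 'cV[R]_n)
  (x : 'cV[R]_n) : 'cV[R]_n :=
  F2 *m kron2 x + F1 *m x + F0.

End Defs.

(* With [v = Q (x - s)] and [r = |v|], the identity [msqrt (Q^T Q) = Q] makes
   all [O]-weighted quantities Euclidean in [v], and expanding the vector field
   around the pivot gives
     d/dt (r^2 / 2) = <v, Q f(x)> <= a2 r^3 + m1 r^2 + a0 r
                   = a2 r (r - r_-) (r - r_+).
   So [r^2] cannot increase while [r_- < r < r_+], which keeps [r t <= r 0]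
   when [r 0] lies in [[r_-, r_+)].  Below [r_-] the quantity
   [exp (2 a2 r_+ t) (r^2 - r_-^2)] cannot increase, so [r] stays strictly
   below [r_-].  The bound by the logarithmic norm and the uniqueness of the
   positive square root both come from a top eigenvector of a symmetric
   matrix, obtained from the supremum of its Rayleigh quotient. *)

From HB Require Import structures.
From mathcomp Require Import all_boot all_order all_algebra.
From mathcomp Require Import all_classical all_reals all_analysis.
From mathcomp.real_closed Require Import mxtens.
From mathcomp Require Import ring lra.
Import Order.TTheory GRing.Theory Num.Theory.
Import numFieldNormedType.Exports.
Local Open Scope classical_set_scope.
Local Open Scope ring_scope.
Set Implicit Arguments. Unset Strict Implicit. Unset Printing Implicit Defensive.

Section Euclid.
Variable R : realType.

Definition dot {n} (y z : 'cV[R]_n) : R := \sum_(i < n) y i 0 * z i 0.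
Definition normsq {n} (y : 'cV[R]_n) : R := dot y y.

Lemma dotE n (y z : 'cV[R]_n) : dot y z = (y^T *m z) 0 0.
Proof. by rewrite /dot !mxE; apply: eq_bigr => i _; rewrite mxE. Qed.

Lemma dotC n (y z : 'cV[R]_n) : dot y z = dot z y.
Proof. by apply: eq_bigr => i _; rewrite mulrC. Qed.

Lemma dotDl n (y y' z : 'cV[R]_n) : dot (y + y') z = dot y z + dot y' z.
Proof. by rewrite /dot -big_split; apply: eq_bigr => i _; rewrite mxE mulrDl. Qed.

Lemma dotDr n (y z z' : 'cV[R]_n) : dot y (z + z') = dot y z + dot y z'.
Proof. by rewrite dotC dotDl !(dotC _ y). Qed.

Lemma dotZl n c (y z : 'cV[R]_n) : dot (c *: y) z = c * dot y z.
Proof. by rewrite /dot mulr_sumr; apply: eq_bigr => i _; rewrite mxE mulrA. Qed.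

Lemma dotZr n c (y z : 'cV[R]_n) : dot y (c *: z) = c * dot y z.
Proof. by rewrite dotC dotZl dotC. Qed.

Lemma dotNl n (y z : 'cV[R]_n) : dot (- y) z = - dot y z.
Proof. by rewrite -scaleN1r dotZl mulN1r. Qed.

Lemma dotNr n (y z : 'cV[R]_n) : dot y (- z) = - dot y z.
Proof. by rewrite dotC dotNl dotC. Qed.

Lemma dotBl n (y y' z : 'cV[R]_n) : dot (y - y') z = dot y z - dot y' z.
Proof. by rewrite dotDl dotNl. Qed.

Lemma dotBr n (y z z' : 'cV[R]_n) : dot y (z - z') = dot y z - dot y z'.
Proof. by rewrite dotDr dotNr. Qed.

Lemma dot0r n (y : 'cV[R]_n) : dot y 0 = 0.
Proof. by rewrite -(scale0r 0) dotZr mul0r. Qed.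

Lemma dot_mulmxr m n (A : 'M[R]_(m, n)) y z : dot y (A *m z) = dot (A^T *m y) z.
Proof. by rewrite !dotE trmx_mul trmxK mulmxA. Qed.

Lemma dot_sym_mulmx n (S : 'M[R]_n) y z : S^T = S -> dot y (S *m z) = dot z (S *m y).
Proof. by move=> Ssym; rewrite dot_mulmxr Ssym dotC. Qed.

Lemma normsq_ge0 n (y : 'cV[R]_n) : 0 <= normsq y.
Proof. by apply: sumr_ge0 => i _; rewrite -expr2 sqr_ge0. Qed.

Lemma normsq_eq0 n (y : 'cV[R]_n) : (normsq y == 0) = (y == 0).
Proof.
apply/idP/eqP => [|->]; last by rewrite /normsq dot0r.
rewrite psumr_eq0 => [/allP y0|i _]; last by rewrite -expr2 sqr_ge0.
apply/matrixP => i j; rewrite (ord1 j) mxE.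
by apply/eqP; rewrite -sqrf_eq0 expr2 -(implyTb (_ == 0)) y0 ?mem_index_enum.
Qed.

Lemma normsq_gt0 n (y : 'cV[R]_n) : y != 0 -> 0 < normsq y.
Proof. by rewrite lt_def normsq_ge0 normsq_eq0 => ->. Qed.

Lemma normsqZ n c (y : 'cV[R]_n) : normsq (c *: y) = c ^+ 2 * normsq y.
Proof. by rewrite /normsq dotZl dotZr mulrA expr2. Qed.

Lemma enormE n (y : 'cV[R]_n) : enorm y = Num.sqrt (normsq y).
Proof. by congr Num.sqrt; apply: eq_bigr => i _; rewrite expr2. Qed.

Lemma enorm_ge0 n (y : 'cV[R]_n) : 0 <= enorm y.
Proof. by rewrite enormE sqrtr_ge0. Qed.

Lemma enorm0 n : enorm (0 : 'cV[R]_n) = 0.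
Proof. by rewrite enormE /normsq dot0r sqrtr0. Qed.

Lemma enorm_sq n (y : 'cV[R]_n) : enorm y ^+ 2 = normsq y.
Proof. by rewrite enormE sqr_sqrtr // normsq_ge0. Qed.

Lemma enorm_gt0 n (y : 'cV[R]_n) : y != 0 -> 0 < enorm y.
Proof. by move=> y0; rewrite enormE sqrtr_gt0 normsq_gt0. Qed.

Lemma enormZ n c (y : 'cV[R]_n) : enorm (c *: y) = `|c| * enorm y.
Proof. by rewrite !enormE normsqZ sqrtrM ?sqr_ge0 // sqrtr_sqr. Qed.

Lemma discriminant_le (a b c : R) : 0 <= c ->
  (forall l, 0 <= a - 2 * l * b + l ^+ 2 * c) -> b ^+ 2 <= a * c.
Proof.
move=> c0 ge0; have [cgt0|] := ltP 0 c.
  rewrite -subr_ge0.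
  have -> : a * c - b ^+ 2 = c * (a - 2 * (b / c) * b + (b / c) ^+ 2 * c).
    by field; rewrite gt_eqF.
  exact: mulr_ge0 (ltW cgt0) (ge0 _).
move=> cle0; have c00 : c = 0 by apply/le_anti; rewrite cle0 c0.
rewrite {}c00 in ge0 *.
have [->|b0] := eqVneq b 0; first by rewrite expr0n mulr0.
have := ge0 ((a + 1) / (2 * b)); rewrite mulr0 addr0.
have -> : 2 * ((a + 1) / (2 * b)) * b = a + 1 by field.
lra.
Qed.

Definition psd {n} (P : 'M[R]_n) := forall y, 0 <= dot y (P *m y).

Lemma psd_cauchy_schwarz n (P : 'M[R]_n) y z : P^T = P -> psd P ->
  dot y (P *m z) ^+ 2 <= dot y (P *m y) * dot z (P *m z).
Proof.
move=> Psym psdP; apply: discriminant_le => // l.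
have := psdP (y - l *: z); rewrite mulmxBr -scalemxAr.
by rewrite !(dotBl, dotBr, dotZl, dotZr) (dot_sym_mulmx z y Psym); lra.
Qed.

Lemma cauchy_schwarz n (y z : 'cV[R]_n) : dot y z ^+ 2 <= normsq y * normsq z.
Proof.
have := @psd_cauchy_schwarz n 1%:M y z (trmx1 _ _).
by rewrite !mul1mx; apply => w; rewrite mul1mx normsq_ge0.
Qed.

Lemma dot_le n (y z : 'cV[R]_n) : dot y z <= enorm y * enorm z.
Proof.
apply: le_trans (ler_norm _) _.
rewrite -(ler_pXn2r (n:=2)) ?nnegrE ?mulr_ge0 ?enorm_ge0 //.
by rewrite real_normK ?num_real // exprMn !enorm_sq cauchy_schwarz.
Qed.

End Euclid.

Section OperatorNorm.
Variables (R : realType) (m p : nat).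
Implicit Type A : 'M[R]_(m, p).

Definition frobenius2 A : R := \sum_(i < m) \sum_(j < p) A i j ^+ 2.

Lemma frobenius2_ge0 A : 0 <= frobenius2 A.
Proof. by apply: sumr_ge0 => i _; apply: sumr_ge0 => j _; rewrite sqr_ge0. Qed.

Lemma normsq_mulmx_le A y : normsq (A *m y) <= frobenius2 A * normsq y.
Proof.
rewrite {1}/normsq /dot /frobenius2 mulr_suml; apply: ler_sum => i _.
have -> : (A *m y) i 0 = dot (row i A)^T y.
  by rewrite mxE; apply: eq_bigr => j _; rewrite !mxE.
have -> : \sum_(j < p) A i j ^+ 2 = normsq (row i A)^T.
  by apply: eq_bigr => j _; rewrite !mxE expr2.
by rewrite -expr2 cauchy_schwarz.
Qed.

Lemma has_sup_opnorm A :
  has_sup [set enorm (A *m y) | y in [set y : 'cV[R]_p | enorm y <= 1]].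
Proof.
split; first by exists (enorm (A *m 0)), 0; rewrite //= enorm0.
exists (frobenius2 A + 1) => _ [y /= y1 <-].
have : enorm (A *m y) ^+ 2 <= frobenius2 A.
  rewrite enorm_sq; apply: le_trans (normsq_mulmx_le _ _) _.
  rewrite ler_piMr ?frobenius2_ge0 // -enorm_sq expr_le1 ?enorm_ge0 //.
have := frobenius2_ge0 A; nra.
Qed.

Lemma opnorm_ub A y : enorm y <= 1 -> enorm (A *m y) <= opnorm A.
Proof. by move=> y1; apply: sup_upper_bound (has_sup_opnorm A) _ _; exists y. Qed.

Lemma opnorm_ge0 A : 0 <= opnorm A.
Proof. by have := @opnorm_ub A 0; rewrite mulmx0 !enorm0 ler01 => /(_ isT). Qed.

Lemma opnorm_le A y : enorm (A *m y) <= opnorm A * enorm y.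
Proof.
have [->|y0] := eqVneq y 0; first by rewrite mulmx0 !enorm0 mulr0.
have ny0 := enorm_gt0 y0.
have := @opnorm_ub A ((enorm y)^-1 *: y).
rewrite -scalemxAr !enormZ ger0_norm ?invr_ge0 ?enorm_ge0 // mulVf ?gt_eqF //.
by rewrite lexx mulrC ler_pdivrMr // => /(_ isT).
Qed.

End OperatorNorm.

Section SymmetricMatrices.
Variable R : realType.

Lemma psd_normsq_mulmx_le n (P : 'M[R]_n) y : P^T = P -> psd P ->
  normsq (P *m y) <= opnorm P * dot y (P *m y).
Proof.
move=> Psym psdP; set N := normsq (P *m y); set q := dot y (P *m y).
have NE : N = dot y (P *m (P *m y)) by rewrite dot_mulmxr Psym.
have N2_le : N ^+ 2 <= q * dot (P *m y) (P *m (P *m y)).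
  by rewrite NE; apply: psd_cauchy_schwarz.
have qPy_le : dot (P *m y) (P *m (P *m y)) <= opnorm P * N.
  apply: le_trans (dot_le _ _) _; rewrite /N -enorm_sq expr2 mulrCA.
  by apply: ler_wpM2l; [exact: enorm_ge0 | exact: opnorm_le].
have q0 : 0 <= q := psdP y.
have [N0|Ngt0] := eqVneq N 0; first by rewrite N0 mulr_ge0 ?opnorm_ge0.
have {}Ngt0 : 0 < N by rewrite lt_def Ngt0 normsq_ge0.
rewrite -(ler_pM2l Ngt0) -expr2; apply: le_trans N2_le _.
by rewrite mulrA [q * _]mulrC [N * _]mulrC; exact: ler_wpM2r.
Qed.

Lemma unitmx_psd_form_ge n (P : 'M[R]_n) y : P^T = P -> psd P -> P \in unitmx ->
  normsq y = 1 -> 1 <= opnorm (invmx P) ^+ 2 * opnorm P * dot y (P *m y).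
Proof.
move=> Psym psdP Pu y1.
have : enorm y <= opnorm (invmx P) * enorm (P *m y).
  by rewrite -{1}[y](mulKmx Pu) opnorm_le.
rewrite enormE y1 sqrtr1 => /(lerXn2r 2); rewrite !nnegrE ler01 => /(_ isT).
rewrite mulr_ge0 ?opnorm_ge0 ?enorm_ge0 // => /(_ isT).
rewrite expr1n exprMn enorm_sq -mulrA => /le_trans; apply.
by rewrite ler_wpM2l ?exprn_ge0 ?opnorm_ge0 ?psd_normsq_mulmx_le.
Qed.

Lemma eigenvalue_unitmx n (S : 'M[R]_n) a :
  eigenvalue S a = ~~ (S - a%:M \in unitmx).
Proof. by rewrite /eigenvalue /eigenspace kermx_eq0 row_free_unit. Qed.

Lemma sym_eigenvector n (S : 'M[R]_n) a : S^T = S -> eigenvalue S a ->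
  exists2 w : 'cV[R]_n, w != 0 & S *m w = a *: w.
Proof.
move=> Ssym /eigenvalueP [v vS v0]; exists v^T; first by rewrite trmx_eq0.
by rewrite -{1}Ssym -trmx_mul vS linearZ.
Qed.

Definition max_rayleigh {n} (S : 'M[R]_n) : R :=
  sup [set dot y (S *m y) | y in [set y | normsq y = 1]].

Section Rayleigh.
Variables (n : nat) (S : 'M[R]_n.+1).

Lemma has_sup_rayleigh :
  has_sup [set dot y (S *m y) | y in [set y : 'cV[R]_n.+1 | normsq y = 1]].
Proof.
split.
  exists (dot (delta_mx 0 0) (S *m delta_mx 0 0)), (delta_mx 0 0) => //=.
  by rewrite /normsq dotE trmx_delta mul_delta_mx mxE !eqxx.
exists (opnorm S) => _ [y /= y1 <-].
have ey1 : enorm y = 1 by rewrite enormE y1 sqrtr1.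
by apply: le_trans (dot_le _ _) _; rewrite ey1 mul1r -[leRHS]mulr1 -ey1 opnorm_le.
Qed.

Lemma rayleigh_le y : dot y (S *m y) <= max_rayleigh S * normsq y.
Proof.
have [->|y0] := eqVneq y 0; first by rewrite mulmx0 /normsq !dot0r mulr0.
have ny0 := enorm_gt0 y0; set k := (enorm y)^-1.
have : dot (k *: y) (S *m (k *: y)) <= max_rayleigh S.
  apply: sup_upper_bound has_sup_rayleigh _ _; exists (k *: y) => //=.
  by rewrite normsqZ -enorm_sq exprVn mulVf // sqrf_eq0 gt_eqF.
rewrite -scalemxAr dotZl dotZr mulrA -expr2 /k exprVn enorm_sq mulrC.
by rewrite ler_pdivrMr // normsq_gt0.
Qed.

Hypothesis Ssym : S^T = S.

(* The form of [c - S] is psd and nearly vanishes on unit vectors, which a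
   bounded inverse forbids. *)
Lemma eigenvalue_max_rayleigh : eigenvalue S (max_rayleigh S).
Proof.
rewrite eigenvalue_unitmx; set c := max_rayleigh S; apply/negP => unitSc.
pose P := c%:M - S.
have Pu : P \in unitmx by rewrite /P -opprB -scaleN1r unitmxZ ?unitrN1.
have Psym : P^T = P by rewrite /P linearB /= tr_scalar_mx Ssym.
have qP w : dot w (P *m w) = c * normsq w - dot w (S *m w).
  by rewrite mulmxBl dotBr mul_scalar_mx dotZr.
have psdP : psd P by move=> w; rewrite qP subr_ge0 rayleigh_le.
set K := opnorm (invmx P) ^+ 2 * opnorm P.
have K0 : 0 <= K by rewrite mulr_ge0 ?exprn_ge0 ?opnorm_ge0.
have eps0 : 0 < (K + 1)^-1 by rewrite invr_gt0; lra.
have [_ [y /= y1 <-]] := sup_adherent eps0 has_sup_rayleigh.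
rewrite -/(max_rayleigh S) -/c => ltcy.
have := unitmx_psd_form_ge Psym psdP Pu y1.
rewrite -/K qP y1 mulr1 => Kq_ge1.
have : K * (c - dot y (S *m y)) <= K * (K + 1)^-1.
  by apply: ler_wpM2l => //; lra.
have K1 : K + 1 != 0 by rewrite gt_eqF //; lra.
have -> : K * (K + 1)^-1 = 1 - (K + 1)^-1 by field.
lra.
Qed.

Lemma lambda_max_sym : lambda_max S = max_rayleigh S.
Proof.
have ub : ubound [set a | eigenvalue S a] (max_rayleigh S).
  move=> a /(sym_eigenvector Ssym) [w w0 Sw].
  by have := rayleigh_le w; rewrite Sw dotZr ler_pM2r // normsq_gt0.
have ev := eigenvalue_max_rayleigh.
apply/le_anti; rewrite ge_sup //=; last by exists (max_rayleigh S).
by apply: sup_upper_bound; first by split; exists (max_rayleigh S).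
Qed.

End Rayleigh.

Lemma sym_form_le_lambda_max n (S : 'M[R]_n) y : S^T = S ->
  dot y (S *m y) <= lambda_max S * normsq y.
Proof.
case: n S y => [|n] S y Ssym; first by rewrite /normsq /dot !big_ord0 mulr0.
by rewrite lambda_max_sym // rayleigh_le.
Qed.

Lemma lognorm_le n (M : 'M[R]_n) y : dot y (M *m y) <= lognorm M * normsq y.
Proof.
have Ssym : (M + M^T)^T = M + M^T by rewrite linearD /= trmxK addrC.
have := sym_form_le_lambda_max y Ssym.
rewrite mulmxDl dotDr (dot_mulmxr M^T) trmxK dotC /lognorm; lra.
Qed.

Lemma posdefE n (Q : 'M[R]_n) y : (y^T *m Q *m y) 0 0 = dot y (Q *m y).
Proof. by rewrite dotE mulmxA. Qed.

Lemma posdef_unitmx n (Q : 'M[R]_n) : posdef Q -> Q \in unitmx.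
Proof.
move=> [Qsym Qpos]; apply: contraT => Qnu.
have : eigenvalue Q 0 by rewrite eigenvalue_unitmx raddf0 subr0.
case/(sym_eigenvector Qsym) => w w0 Qw.
by have := Qpos w w0; rewrite posdefE Qw scale0r dot0r ltxx.
Qed.

(* Testing [S D + D Q = 0] on a top eigenvector of [D] forces the top
   eigenvalue of [D] to vanish. *)
Lemma sylvester_form_le0 n (S Q D : 'M[R]_n) y : posdef S -> posdef Q ->
  D^T = D -> S *m D + D *m Q = 0 -> dot y (D *m y) <= 0.
Proof.
case: n S Q D y => [|n] S Q D y [_ Spos] [_ Qpos] Dsym SDQ.
  by rewrite /dot big_ord0.
have [w w0 Dw] := sym_eigenvector Dsym (eigenvalue_max_rayleigh Dsym).
set c := max_rayleigh D in Dw.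
have : dot w ((S *m D + D *m Q) *m w) = c * (dot w (S *m w) + dot w (Q *m w)).
  rewrite mulmxDl dotDr -!mulmxA Dw -scalemxAr dotZr.
  by rewrite (dot_sym_mulmx w (Q *m w) Dsym) Dw dotZr (dotC (Q *m w)) mulrDr.
rewrite SDQ mul0mx dot0r => /esym/eqP; rewrite mulf_eq0 => /orP[/eqP c0|].
  by apply: le_trans (rayleigh_le D y) _; rewrite -/c c0 mul0r.
have := Spos w w0; have := Qpos w w0; rewrite !posdefE => Qw Sw.
by rewrite gt_eqF ?addr_gt0.
Qed.

Lemma sym_form_eq0 n (D : 'M[R]_n) : D^T = D ->
  (forall y, dot y (D *m y) = 0) -> D = 0.
Proof.
move=> Dsym D0.
have Dyz y z : dot y (D *m z) = 0.
  have := D0 (y + z); rewrite mulmxDr !(dotDl, dotDr) !D0 add0r addr0.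
  by rewrite (dot_sym_mulmx z y Dsym) -mulr2n => /eqP; rewrite mulrn_eq0 => /eqP.
apply/matrixP => i j; have := Dyz (delta_mx i 0) (delta_mx j 0).
by rewrite dotE trmx_delta -rowE -colE !mxE.
Qed.

Lemma msqrt_trmx_mul n (Q : 'M[R]_n) : posdef Q -> msqrt (Q^T *m Q) = Q.
Proof.
move=> PQ; have Qsym := PQ.1.
have [PS SS] : [set S | posdef S /\ S *m S = Q^T *m Q] (msqrt (Q^T *m Q)).
  by apply: xgetPex; exists Q; rewrite Qsym.
set S := msqrt _ in PS SS *; set D := S - Q.
have Dsym : D^T = D by rewrite linearB /= PS.1 Qsym.
have SDQ : S *m D + D *m Q = 0.
  by rewrite mulmxBr mulmxBl SS Qsym addrA subrK subrr.
have SDQN : S *m (- D) + (- D) *m Q = 0 by rewrite mulmxN mulNmx -opprD SDQ oppr0.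
apply/eqP; rewrite -subr_eq0; apply/eqP/sym_form_eq0 => // y; apply/le_anti.
rewrite (sylvester_form_le0 y PS PQ Dsym SDQ) /= -oppr_le0 -dotNr -mulNmx.
by rewrite (sylvester_form_le0 y PS PQ _ SDQN) // linearN /= Dsym.
Qed.

End SymmetricMatrices.

Section Kronecker.
Variable R : realType.

Lemma normsq_kron2 n (v : 'cV[R]_n) : normsq (kron2 v) = normsq v ^+ 2.
Proof.
rewrite expr2 /normsq /dot mxtens.mulr_sum; apply: eq_bigr => k _.
by rewrite /kron2 !mxE !ord1; ring.
Qed.

Lemma enorm_kron2 n (v : 'cV[R]_n) : enorm (kron2 v) = enorm v ^+ 2.
Proof. by rewrite enorm_sq enormE normsq_kron2 sqrtr_sqr ger0_norm ?normsq_ge0. Qed.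

Lemma kron2D n (u s : 'cV[R]_n) :
  kron2 (u + s) = kron2 u + tensmx u s + tensmx s u + kron2 s.
Proof. by apply/matrixP => i j; rewrite !mxE; ring. Qed.

Lemma kron_vI_mul n (s u : 'cV[R]_n) : kron_vI s *m u = tensmx s u.
Proof.
apply/matrixP => i j; rewrite (ord1 j) [LHS]mxE [RHS]mxE !ord1.
rewrite -[u in RHS]mul1mx [(1%:M *m u) _ _]mxE mulr_sumr; apply: eq_bigr => k _.
rewrite castmxE cast_ord_id mxE ord1 mulrA; congr (_ * _ * _).
by congr (_ _ _); apply: val_inj => /=; rewrite modn_small.
Qed.

Lemma kron_Iv_mul n (s u : 'cV[R]_n) : kron_Iv s *m u = tensmx u s.
Proof.
apply/matrixP => i j; rewrite (ord1 j) [LHS]mxE [RHS]mxE !ord1.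
rewrite -[u in RHS]mul1mx [(1%:M *m u) _ _]mxE mulr_suml; apply: eq_bigr => k _.
rewrite castmxE cast_ord_id mxE ord1 mulrAC; congr (_ * _ * _).
by congr (_ _ _); apply: val_inj => /=; rewrite divn1.
Qed.

Lemma qrhs_pivot n (F2 : 'M[R]_(n, n * n)) F1 F0 s x :
  qrhs F2 F1 F0 x =
  F2s F2 s *m kron2 (x - s) + F1s F2 F1 s *m (x - s) + F0s F2 F1 F0 s.
Proof.
rewrite /qrhs /F2s /F1s /F0s; set u := x - s.
have {1 2}-> : x = u + s by rewrite subrK.
rewrite kron2D !mulmxDl -mulmxA mulmxDl kron_vI_mul kron_Iv_mul !mulmxDr.
by apply/matrixP => i j; rewrite !mxE; ring.
Qed.

End Kronecker.

Section Energy.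
Variable R : realType.

Lemma normO_vec_trmx_mul n (Q : 'M[R]_n) y :
  normO_vec (Q^T *m Q) y = enorm (Q *m y).
Proof. by rewrite /normO_vec enormE /normsq dotE trmx_mul !mulmxA. Qed.

Lemma energy_le n (Q : 'M[R]_n) F2 F1 F0 s X : posdef Q ->
  dot (Q *m (X - s)) (Q *m qrhs F2 F1 F0 X) <=
    normO_mat2 (Q^T *m Q) (F2s F2 s) * enorm (Q *m (X - s)) ^+ 3
  + lognormO (Q^T *m Q) (F1s F2 F1 s) * enorm (Q *m (X - s)) ^+ 2
  + normO_vec (Q^T *m Q) (F0s F2 F1 F0 s) * enorm (Q *m (X - s)).
Proof.
move=> PQ; have Qu := posdef_unitmx PQ.
rewrite /normO_mat2 /lognormO msqrt_trmx_mul // normO_vec_trmx_mul.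
set u := X - s; set v := Q *m u; set Qi := invmx Q.
have uE : u = Qi *m v by rewrite mulKmx.
rewrite (qrhs_pivot _ _ _ s) -/u (mulmxDr Q (_ + _)) (mulmxDr Q (F2s F2 s *m _)).
rewrite !dotDr; apply: lerD; first apply: lerD.
- set M := Q *m F2s F2 s *m tensmx Qi Qi.
  have -> : Q *m (F2s F2 s *m kron2 u) = M *m kron2 v.
    by rewrite /M -!mulmxA (tensmx_mul Qi Qi v v) uE.
  apply: le_trans (dot_le _ _) _.
  rewrite exprSr mulrA [leRHS]mulrC; apply: ler_wpM2l; first exact: enorm_ge0.
  by rewrite -enorm_kron2 opnorm_le.
- have -> : Q *m (F1s F2 F1 s *m u) = Q *m F1s F2 F1 s *m Qi *m v.
    by rewrite uE !mulmxA.
  by rewrite enorm_sq lognorm_le.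
- by rewrite mulrC dot_le.
Qed.

End Energy.

Section Regularity.
Variable R : realType.

Lemma continuous_sum (T : topologicalType) m (F : 'I_m -> T -> R) :
  (forall i, continuous (F i)) -> continuous (fun y => \sum_(i < m) F i y).
Proof. by move=> Fc; apply: continuous_big => //; exact: add_continuous. Qed.

Lemma continuous_mx_coord (T : topologicalType) p q (g : T -> 'M[R]_(p, q)) i j :
  continuous g -> continuous (fun y => g y i j).
Proof.
move=> gc y.
exact: (@continuous_comp T _ _ g (fun M : 'M[R]_(p, q) => M i j) y (gc y)
  (@coord_continuous R p q i j (g y))).
Qed.

Lemma continuous_mulmx_coord (T : topologicalType) m n (A : 'M[R]_(m, n))
    (g : T -> 'cV[R]_n) i :
  continuous g -> continuous (fun y => (A *m g y) i 0).
Proof.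
move=> gc; under eq_fun do rewrite mxE.
apply: continuous_sum => k y; apply: continuousM; first exact: cst_continuous.
exact: continuous_mx_coord.
Qed.

Lemma continuous_normsq (T : topologicalType) n (h : T -> 'cV[R]_n) :
  (forall i, continuous (fun y => h y i 0)) -> continuous (fun y => normsq (h y)).
Proof. by move=> hc; apply: continuous_sum => i y; apply: continuousM; exact: hc. Qed.

Lemma is_derive_mx_coord p q (g : R -> 'M[R]_(p, q)) (t : R) dg i j :
  is_derive t 1 g dg -> is_derive t 1 (fun y => g y i j) (dg i j).
Proof.
move=> gd; have dg_ex : derivable g t 1 by case: gd.
have := derive_mx dg_ex; rewrite derive_val => ->; rewrite mxE.
exact/derivableP/((derivable_mxP g t 1).1 dg_ex).
Qed.

Lemma is_derive_sum_ord m (F : 'I_m -> R -> R) (dF : 'I_m -> R) (t : R) :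
  (forall i, is_derive t 1 (F i) (dF i)) ->
  is_derive t 1 (fun y => \sum_(i < m) F i y) (\sum_(i < m) dF i).
Proof. by move=> Fd; have := is_derive_sum Fd; rewrite fct_sumE. Qed.

Lemma is_derive_mulmx_coord m n (A : 'M[R]_(m, n)) (g : R -> 'cV[R]_n)
    (t : R) dg i :
  is_derive t 1 g dg -> is_derive t 1 (fun y => (A *m g y) i 0) ((A *m dg) i 0).
Proof.
move=> gd; under eq_fun do rewrite mxE; rewrite mxE.
apply: is_derive_sum_ord => k; exact: is_deriveZ (is_derive_mx_coord k 0 gd).
Qed.

Lemma is_derive_normsq n (h : R -> 'cV[R]_n) (t : R) (dh : 'cV[R]_n) :
  (forall i, is_derive t 1 (fun y => h y i 0) (dh i 0)) ->
  is_derive t 1 (fun y => normsq (h y)) (2 * dot (h t) dh).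
Proof.
move=> hd; rewrite /dot mulr_sumr; apply: is_derive_sum_ord => i.
apply: is_derive_eq (is_deriveM (hd i) (hd i)) _.
by rewrite /GRing.scale /=; ring.
Qed.

Lemma continuous_enorm_sqr_affine (T : topologicalType) n (Q : 'M[R]_n)
    (g : T -> 'cV[R]_n) s :
  continuous g -> continuous (fun y => enorm (Q *m (g y - s)) ^+ 2).
Proof.
move=> gc; under eq_fun do rewrite enorm_sq.
apply: continuous_normsq => i; apply: continuous_mulmx_coord => y.
by apply: continuousB; [exact: gc | exact: cst_continuous].
Qed.

Lemma is_derive_enorm_sqr_affine n (Q : 'M[R]_n) (x : R -> 'cV[R]_n) s (t : R) X :
  is_derive t 1 x X -> is_derive t 1 (fun y => enorm (Q *m (x y - s)) ^+ 2)
    (2 * dot (Q *m (x t - s)) (Q *m X)).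
Proof.
move=> xd; under eq_fun do rewrite enorm_sq.
apply: is_derive_normsq => i; apply: is_derive_mulmx_coord.
by have := is_deriveB xd (is_derive_cst s t 1); rewrite subr0.
Qed.

Lemma continuous_expRM (K : R) : continuous (fun y : R => expR (K * y)).
Proof.
by move=> y; apply: continuous_comp; [exact: mulrl_continuous | exact: continuous_expR].
Qed.

Lemma is_derive_expRM (K y : R) :
  is_derive y 1 (fun y : R => expR (K * y)) (expR (K * y) * K).
Proof.
have Kd : is_derive y 1 ( *%R K) K.
  by have := is_deriveZ K (is_derive_id y 1); rewrite /GRing.scale /= mulr1.
exact: (is_derive1_comp (is_derive_expR (K * y)) Kd).
Qed.

Lemma solution_energy_regular n (Q : 'M[R]_n) (x : R -> 'cV[R]_n) s
    (f : R -> 'cV[R]_n) (T : \bar R) (t : R) : (t%:E < T)%E ->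
  {within [set y : R | 0 <= y /\ (y%:E < T)%E], continuous x} ->
  (forall y : R, 0 < y -> (y%:E < T)%E -> is_derive y 1 x (f y)) ->
  {within `[0, t], continuous (fun y => enorm (Q *m (x y - s)) ^+ 2)} /\
  forall y, 0 < y < t -> is_derive y 1 (fun y => enorm (Q *m (x y - s)) ^+ 2)
    (2 * dot (Q *m (x y - s)) (Q *m f y)).
Proof.
move=> tT xc xd; split.
  apply: continuous_enorm_sqr_affine; apply: continuous_subspaceW xc => y.
  rewrite /= in_itv /= => /andP[y0 yt].
  by split => //; apply: le_lt_trans tT; rewrite lee_fin.
move=> y /andP[y0 yt]; apply/is_derive_enorm_sqr_affine/xd => //.
by apply: lt_trans tT; rewrite lte_fin.
Qed.

End Regularity.

Section Barrier.
Variable R : realType.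
Implicit Types (f df : R -> R) (t c d : R).

Lemma within_continuous_dist f (A : set R) x : {within A, continuous f} -> A x ->
  forall e, 0 < e -> exists2 del, 0 < del &
    forall y, A y -> `|x - y| < del -> `|f x - f y| < e.
Proof.
move=> /subspace_continuousP /(_ x) fc Ax e e0.
have /(_ (within_filter _ (nbhs_pfilter x))) := (cvgrPdist_lt _ _).1 (fc Ax) e e0.
by case/(nbhs_ballP _ _) => del del0 fdel; exists del => // y Ay xy; apply: fdel.
Qed.

Lemma last_sublevel f t c : 0 <= t -> {within `[0, t], continuous f} ->
  f 0 <= c -> c < f t ->
  exists s, [/\ 0 <= s < t, f s <= c & forall x, s < x <= t -> c < f x].
Proof.
move=> t0 fc f0 ft; pose S := [set x | 0 <= x <= t /\ f x <= c].
have S0 : S 0 by rewrite /S /= lexx t0.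
have hS : has_sup S by split; [exists 0 | exists t => x [/andP[]]].
have s0 : 0 <= sup S by exact: sup_upper_bound.
have st : sup S <= t by apply: ge_sup; [exists 0 | move=> x [/andP[]]].
have sI : [set` `[0, t]] (sup S) by rewrite /= in_itv /= s0.
have fs : f (sup S) <= c.
  rewrite leNgt; apply/negP => fsc; have e0 : 0 < f (sup S) - c by rewrite subr_gt0.
  have [del del0 fdel] := within_continuous_dist fc sI e0.
  have [y [/andP[y0 yt] fy] sy] := sup_adherent del0 hS.
  have ys : y <= sup S by apply: sup_upper_bound => //; rewrite /S /= y0 yt.
  have ydel : `|sup S - y| < del by rewrite ger0_norm ?subr_ge0 //; lra.
  have := fdel y; rewrite /= in_itv /= y0 yt => /(_ isT ydel).
  by rewrite ltr_norml => /andP[_]; lra.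
exists (sup S); split => //.
  by rewrite s0 lt_neqAle st andbT; apply: contraTneq ft => <-; rewrite -leNgt.
move=> x /andP[sx xt]; rewrite ltNge; apply: contraL (sx) => fx.
rewrite -leNgt; apply: sup_upper_bound => //; split => //.
by rewrite xt (le_trans s0) // ltW.
Qed.

(* After its last visit to [f <= c], the function [f] would have to climb
   through the band [c < f < d], where it cannot increase. *)
Lemma barrier_le f df t c d : 0 <= t -> c < d ->
  {within `[0, t], continuous f} ->
  (forall x, 0 < x < t -> is_derive x 1 f (df x)) ->
  (forall x, 0 < x < t -> c < f x < d -> df x <= 0) ->
  f 0 <= c -> f t <= c.
Proof.
move=> t0 cd fc fd fband f0; rewrite leNgt; apply/negP => ft.
have [s [/andP[s0 st] fs above]] := last_sublevel t0 fc f0 ft.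
have sI : [set` `[0, t]] s by rewrite /= in_itv /= s0 ltW.
have e0 : 0 < d - c by rewrite subr_gt0.
have [del del0 fdel] := within_continuous_dist fc sI e0.
pose b := Num.min t (s + del / 2).
have sb : s < b by rewrite lt_min st /=; lra.
have bt : b <= t by rewrite ge_min lexx.
have bdel : b <= s + del / 2 by rewrite ge_min lexx orbT.
have band x : s < x <= b -> c < f x < d.
  move=> /andP[sx xb]; rewrite above ?sx ?(le_trans xb) //=.
  have := fdel x; rewrite /= in_itv /= (le_trans s0 (ltW sx)) (le_trans xb bt).
  rewrite distrC ger0_norm ?subr_ge0 ?(ltW sx) // => /(_ isT).
  by rewrite ltr_norml => /(_ _) /andP[]; lra.
have inside x : x \in `]s, b[ -> 0 < x < t.
  by rewrite in_itv /= => /andP[sx xb]; apply/andP; split; lra.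
have fd' x : x \in `]s, b[ -> derivable f x 1 by move=> /inside /fd [].
have fle0 x : x \in `]s, b[ -> (f^`())%classic x <= 0.
  move=> xsb; have fdx := fd _ (inside _ xsb); rewrite derive1E derive_val.
  apply: fband (inside _ xsb) (band _ _).
  by move: xsb; rewrite in_itv /= => /andP[? ?]; apply/andP; split; lra.
have fc' : {within `[s, b], continuous f}.
  apply: continuous_subspaceW fc => x /=; rewrite !in_itv /= => /andP[? ?].
  by apply/andP; split; lra.
have := ler0_derive1_le_cc fd' fle0 fc'.
move=> /(_ b s); rewrite !in_itv /= !lexx (ltW sb) => /(_ isT isT isT).
by have := band b; rewrite sb lexx => /(_ isT) /andP[]; lra.
Qed.

End Barrier.

Section CubicComparison.
Variables (R : realType) (a rm rp t : R) (r dr2 : R -> R).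
Hypotheses (a_gt0 : 0 < a) (rm_ge0 : 0 <= rm) (rm_le_rp : rm <= rp).
Hypotheses (t_ge0 : 0 <= t) (r_ge0 : forall y, 0 <= r y).
Hypothesis r2_cont : {within `[0, t], continuous (fun y => r y ^+ 2)}.
Hypothesis r2_deriv :
  forall y, 0 < y < t -> is_derive y 1 (fun y => r y ^+ 2) (dr2 y).
Hypothesis dr2_le :
  forall y, 0 < y < t -> dr2 y <= 2 * a * r y * (r y - rm) * (r y - rp).

Lemma le_init_norm : rm <= r 0 < rp -> r t <= r 0.
Proof.
move=> /andP[rm_r0 r0_rp].
have r0_ge0 := r_ge0 0; have rt_ge0 := r_ge0 t.
suff : r t ^+ 2 <= r 0 ^+ 2 by rewrite ler_sqr ?nnegrE.
apply: (barrier_le (d := rp ^+ 2) t_ge0 _ r2_cont r2_deriv) => //.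
  by rewrite ltr_pXn2r ?nnegrE //; lra.
move=> y yt /andP[r0_ry ry_rp]; apply: le_trans (dr2_le yt) _.
have ry_ge0 := r_ge0 y.
have r0_lt_ry : r 0 < r y by rewrite -(ltr_pXn2r (n := 2)) ?nnegrE.
have ry_lt_rp : r y < rp by rewrite -(ltr_pXn2r (n := 2)) ?nnegrE //; lra.
rewrite -mulrA; apply: mulr_ge0_le0; first by rewrite !mulr_ge0 // ltW.
by apply: mulr_ge0_le0; lra.
Qed.

Lemma cubic_weighted_le0 (y : R) : 0 <= y < rm ->
  2 * a * y * (y - rm) * (y - rp) + 2 * a * rp * (y ^+ 2 - rm ^+ 2) <= 0.
Proof.
move=> /andP[y_ge0 y_lt].
have -> : 2 * a * y * (y - rm) * (y - rp) + 2 * a * rp * (y ^+ 2 - rm ^+ 2)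
    = - (2 * a * ((rm - y) * (y ^+ 2 + rp * rm))) by ring.
rewrite oppr_le0; apply/mulr_ge0/mulr_ge0; rewrite ?subr_ge0 ?(ltW y_lt) //.
  by rewrite mulr_ge0 ?ler0n ?(ltW a_gt0).
by rewrite addr_ge0 ?sqr_ge0 ?mulr_ge0 ?(le_trans rm_ge0 rm_le_rp).
Qed.

(* [exp (2 a rp y) (r y ^ 2 - rm ^ 2)] cannot increase while [r < rm]: this
   turns the non-strict barrier into a strict bound. *)
Lemma lt_small_root : r 0 < rm -> r t < rm.
Proof.
move=> r0_rm; set K := 2 * a * rp.
pose E y := expR (K * y); pose G y := r y ^+ 2 - rm ^+ 2; pose h y := E y * G y.
have Gd (y : R) : 0 < y < t -> is_derive y 1 G (dr2 y).
  move=> yt; have := is_deriveB (r2_deriv yt) (is_derive_cst (rm ^+ 2) y 1).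
  by rewrite subr0.
have EGd (y : R) : 0 < y < t -> is_derive y 1 h (E y * dr2 y + G y * (E y * K)).
  by move=> yt; exact: is_deriveM (is_derive_expRM K y) (Gd y yt).
have EGc : {within `[0, t], continuous h}.
  have Ec : {within `[0, t], continuous E}.
    exact/continuous_subspaceT/continuous_expRM.
  have Gc : {within `[0, t], continuous G}.
    move=> y; apply: (@continuousB R R^o (subspace [set` `[0, t]])
      (fun y => r y ^+ 2) (cst (rm ^+ 2))).
      exact: r2_cont.
    exact: cst_continuous.
  by move=> y; exact: (@continuousM R (subspace [set` `[0, t]]) E G y (Ec y) (Gc y)).
have EG0 : h 0 < 0.
  by rewrite /h /E /G mulr0 expR0 mul1r subr_lt0 ltr_pXn2r ?nnegrE.
have hband y : 0 < y < t -> h 0 < h y < 0 ->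
    E y * dr2 y + G y * (E y * K) <= 0.
  move=> yt /andP[_]; have Ey := expR_gt0 (K * y).
  rewrite /h pmulr_rlt0 // => Gy; have ry_ge0 := r_ge0 y.
  have ry_lt : r y < rm by move: Gy; rewrite subr_lt0 ltr_pXn2r ?nnegrE.
  have -> : E y * dr2 y + G y * (E y * K) = E y * (dr2 y + K * G y) by ring.
  apply: mulr_ge0_le0 (ltW Ey) _; apply: le_trans (lerD (dr2_le yt) (lexx _)) _.
  by apply: cubic_weighted_le0; rewrite ry_ge0.
have := barrier_le t_ge0 EG0 EGc EGd hband (lexx _).
move/le_lt_trans/(_ EG0); rewrite /h pmulr_rlt0 ?expR_gt0 // subr_lt0.
by rewrite ltr_pXn2r ?nnegrE.
Qed.

End CubicComparison.

Section QuadraticRoots.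
Variables (R : realType) (a b c : R).
Hypotheses (a_gt0 : 0 < a) (disc_ge0 : 0 <= b ^+ 2 - 4 * a * c).

Lemma quadratic_factor x :
  a * x ^+ 2 + b * x + c =
  a * (x - (- b - Num.sqrt (b ^+ 2 - 4 * a * c)) / (2 * a))
    * (x - (- b + Num.sqrt (b ^+ 2 - 4 * a * c)) / (2 * a)).
Proof.
have sq := sqr_sqrtr disc_ge0; set D := Num.sqrt _ in sq *.
transitivity (((2 * a * x + b) ^+ 2 - D ^+ 2) / (4 * a)).
  by rewrite sq; field; rewrite gt_eqF.
by field; rewrite gt_eqF.
Qed.

Lemma quadratic_roots_le :
  (- b - Num.sqrt (b ^+ 2 - 4 * a * c)) / (2 * a)
    <= (- b + Num.sqrt (b ^+ 2 - 4 * a * c)) / (2 * a).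
Proof. by rewrite ler_pM2r ?invr_gt0 ?mulr_gt0 // lerD2l ge0_cp ?sqrtr_ge0. Qed.

Lemma quadratic_small_root_ge0 : b < 0 -> 0 <= c ->
  0 <= (- b - Num.sqrt (b ^+ 2 - 4 * a * c)) / (2 * a).
Proof.
move=> b_lt0 c_ge0; rewrite divr_ge0 ?mulr_ge0 ?(ltW a_gt0) // subr_ge0.
have nb_ge0 : 0 <= - b by rewrite oppr_ge0 ltW.
rewrite -(ger0_norm nb_ge0) -sqrtr_sqr sqrrN ler_sqrt ?sqr_ge0 //.
by rewrite lerBlDr lerDl !mulr_ge0 ?(ltW a_gt0).
Qed.

End QuadraticRoots.

Theorem lemma5 (R : realType) (n : nat)
  (F2 : 'M[R]_(n, n * n)) (F1 : 'M[R]_n) (F0 : 'cV[R]_n) (s : 'cV[R]_n)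
  (Q : 'M[R]_n) (T : \bar R) (x : R -> 'cV[R]_n) :
  posdef Q ->
  (0 < T)%E ->
  {within [set t : R | 0 <= t /\ (t%:E < T)%E], continuous x} ->
  (forall t : R, 0 < t -> (t%:E < T)%E -> is_derive t 1 x (qrhs F2 F1 F0 (x t))) ->
  let O := Q^T *m Q in
  let u := fun t => x t - s in
  let v := fun t => Q *m u t in
  let a2 := normO_mat2 O (F2s F2 s) in
  let m1 := lognormO O (F1s F2 F1 s) in
  let a0 := normO_vec O (F0s F2 F1 F0 s) in
  F2s F2 s != 0 ->
  m1 < 0 ->
  0 < m1 ^+ 2 - 4 * a2 * a0 ->
  let rp := (- m1 + Num.sqrt (m1 ^+ 2 - 4 * a2 * a0)) / (2 * a2) in
  let rm := (- m1 - Num.sqrt (m1 ^+ 2 - 4 * a2 * a0)) / (2 * a2) in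
  forall t : R, 0 <= t -> (t%:E < T)%E ->
    normO_vec O (u 0) = enorm (v 0) /\ normO_vec O (u t) = enorm (v t) /\
    (rm <= normO_vec O (u 0) < rp ->
       normO_vec O (u t) <= normO_vec O (u 0) /\ normO_vec O (u 0) < rp) /\
    (0 <= normO_vec O (u 0) < rm -> normO_vec O (u t) < rm).
Proof.
move=> PQ _ xc xd O u v a2 m1 a0 _ m1_lt0 /ltW disc_ge0 rp rm t t_ge0 tT.
have normOE y : normO_vec O (u y) = enorm (v y) by exact: normO_vec_trmx_mul.
have r_ge0 y : 0 <= enorm (v y) by exact: enorm_ge0.
rewrite !normOE; do 2 split => //; have r0_ge0 := r_ge0 0.
have [a2_gt0|a2_le0] := ltP 0 a2; last first.
  have a2_0 : a2 = 0 by apply/le_anti; rewrite a2_le0 opnorm_ge0.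
  by rewrite /rp /rm a2_0 !(mulr0, invr0); split => /andP[]; lra.
have rm_ge0 : 0 <= rm by apply: quadratic_small_root_ge0 => //; exact: sqrtr_ge0.
have [r2c r2d] := solution_energy_regular Q s tT xc xd.
have dr2_le y : 0 < y < t -> 2 * dot (v y) (Q *m qrhs F2 F1 F0 (x y)) <=
    2 * a2 * enorm (v y) * (enorm (v y) - rm) * (enorm (v y) - rp).
  move=> _; have := energy_le F2 F1 F0 s (x y) PQ.
  have := quadratic_factor a2_gt0 disc_ge0 (enorm (v y)); rewrite -/rm -/rp.
  have := r_ge0 y; rewrite -/O -/a2 -/m1 -/a0 -/(u y) -/(v y); nra.
have rmp : rm <= rp by exact: quadratic_roots_le.
split => [r0_band | /andP[_ r0_lt]].
  split; last by case/andP: r0_band.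
  exact: (le_init_norm a2_gt0 t_ge0 r_ge0 r2c r2d dr2_le r0_band).
exact: (lt_small_root a2_gt0 rm_ge0 rmp t_ge0 r_ge0 r2c r2d dr2_le r0_lt).
Qed.
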